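(* An integral polynomial $u(t)\in\mathbb{Z}[t]$ is equal to the polynomial $u(\alpha)$ of some virtual string $\alpha$ if and only if $u(0)=u'(1)=0$.
   Context: A virtual string $\alpha$ of rank $m\ge 0$ consists of an oriented circle $S$ (the core circle) together with $2m$ distinct points of $S$ partitioned into $m$ ordered pairs $(a,b)$, called arrows; $a$ is the tail and $b$ the head of the arrow. For distinct $a,b\in S$, $ab$ denotes the arc of $S$ going from $a$ to $b$ in the positive direction. An arrow $f=(c,d)\neq e=(a,b)$ links $e$ positively if $c\in ab$, $d\in ba$, and negatively if $c\in ba$, $d\in ab$. Let $n(e)\in\mathbb{Z}$ be the number of arrows linking $e$ positively minus the number of arrows linking $e$ negatively. For $k\ge1$ set $u_k(\alpha)=\#\{e: n(e)=k\}-\#\{e:n(e)=-k\}$ and $u(\alpha)=\sum_{k\ge1}u_k(\alpha)t^k\in\mathbb{Z}[t]$. *)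

From HB Require Import structures.
From mathcomp Require Import all_boot all_order all_algebra.
Set Implicit Arguments. Unset Strict Implicit. Unset Printing Implicit Defensive.
Import Order.TTheory GRing.Theory Num.Theory.

(* A virtual string of rank m is encoded as a list of m arrows (tail, head),
   whose 2m endpoints are pairwise distinct natural numbers.  The core circle
   is modelled by nat with the cyclic order induced by the usual order
   (any finite configuration of points on an oriented circle is order-
   isomorphic to such a configuration, after cutting the circle at a point
   that is not an endpoint). *)
Definition endpoints (s : seq (nat * nat)) : seq nat :=
  flatten [seq [:: e.1; e.2] | e <- s].

Definition virtual_string (s : seq (nat * nat)) : bool := uniq (endpoints s).

Definition in_arc (a b x : nat) : bool :=
  if a < b then (a < x) && (x < b) else (a < x) || (x < b).

Definition links_pos (e f : nat * nat) : bool :=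
  in_arc e.1 e.2 f.1 && in_arc e.2 e.1 f.2.
Definition links_neg (e f : nat * nat) : bool :=
  in_arc e.2 e.1 f.1 && in_arc e.1 e.2 f.2.

Local Open Scope ring_scope.

Definition nval (s : seq (nat * nat)) (i : 'I_(size s)) : int :=
  \sum_(j < size s | j != i)
     ((links_pos (nth (0,0)%N s i) (nth (0,0)%N s j))%:Z
      - (links_neg (nth (0,0)%N s i) (nth (0,0)%N s j))%:Z).

Definition u_k (s : seq (nat * nat)) (k : nat) : int :=
  (#|[set i : 'I_(size s) | nval i == k%:Z]|)%:Z
  - (#|[set i : 'I_(size s) | nval i == - k%:Z]|)%:Z.

(* u(alpha) = sum_{k >= 1} u_k t^k ; u_k = 0 for k >= rank, so the sum is
   finite and truncated at size s. *)
Definition u_poly (s : seq (nat * nat)) : {poly int} :=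
  \poly_(k < (size s).+1) (if k == 0%N then 0 else u_k s k).

From HB Require Import structures.
From mathcomp Require Import all_boot all_order all_algebra zify.
Set Implicit Arguments.
Unset Strict Implicit.
Unset Printing Implicit Defensive.

Import Order.TTheory GRing.Theory Num.Theory.
Local Open Scope ring_scope.

(* Each arrow e contributes the monomial sgn(n(e)) t^|n(e)| to u(alpha), so
   u(0) = 0 and u'(1) is the sum of all n(e), which vanishes because f links e
   positively exactly when e links f negatively.  Conversely, the realizable
   polynomials form a subgroup of Z[t]: placing two strings on disjoint arcs of
   the circle adds their polynomials, and reversing the orientation of the
   circle negates it.  The string [fan k], one arrow crossed by k pairwise
   unlinked arrows, has u = t^k - k t, and every u with u(0) = u'(1) = 0 is the
   integral combination of the t^k - k t with coefficients u_k. *)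

Definition link_sign (e f : nat * nat) : int :=
  (links_pos e f)%:Z - (links_neg e f)%:Z.

Definition arrow_index (s : seq (nat * nat)) (e : nat * nat) : int :=
  \sum_(f <- s) link_sign e f.

Definition signed_monomial (n : int) : {poly int} := sgz n *: 'X^`|n|.

Lemma link_sign_diag e : link_sign e e = 0.
Proof.
case: e => a b; rewrite /link_sign /links_pos /links_neg /in_arc /= !ltnn.
by do 2![case: ltnP => ?].
Qed.

Lemma links_pos_neg e f :
  e.1 != e.2 -> f.1 != f.2 -> links_pos e f = links_neg f e.
Proof.
case: e f => a b [c d] /=; rewrite /links_pos /links_neg /in_arc /= => ab cd.
by do ![case: ltnP => ?] => /=; apply/idP/idP; lia.
Qed.

Lemma link_sign_antisym e f :
  e.1 != e.2 -> f.1 != f.2 -> link_sign f e = - link_sign e f.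
Proof.
by move=> he hf; rewrite /link_sign (links_pos_neg he hf) (links_pos_neg hf he) opprB.
Qed.

Lemma norm_link_sign_le1 e f : `|link_sign e f| <= 1.
Proof. by rewrite /link_sign; case: links_pos; case: links_neg. Qed.

Lemma link_sign_separated e f :
  (maxn e.1 e.2 < minn f.1 f.2)%N -> link_sign e f = 0 /\ link_sign f e = 0.
Proof.
case: e f => a b [c d]; rewrite /link_sign /links_pos /links_neg /in_arc /= => sep.
by split; do ![case: ltnP => ?] => /=; lia.
Qed.

Lemma norm_arrow_index_le s e : `|arrow_index s e| <= (size s)%:Z.
Proof.
rewrite -sum1_size -natz natr_sum; apply: le_trans (ler_norm_sum _ _ _) _.
by apply: ler_sum => f _; apply: norm_link_sign_le1.
Qed.

Lemma nval_arrow_index s (i : 'I_(size s)) :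
  nval i = arrow_index s (nth (0, 0)%N s i).
Proof.
rewrite /nval /arrow_index (big_nth (0, 0)%N) big_mkord [RHS](bigD1 i) //=.
by rewrite link_sign_diag add0r.
Qed.

Lemma coef_signed_monomial n k :
  (signed_monomial n)`_k = if k == 0%N then 0 else (n == k%:Z)%:Z - (n == - k%:Z)%:Z.
Proof.
rewrite coefZ coefXn; case: k => [|k] /=; first by case: n => [[|n]|n].
case: n => [[|n]|n] //=; rewrite ?NegzE ?eqr_opp eqz_nat eq_sym /=; by case: eqP.
Qed.

Lemma signed_monomialN n : signed_monomial (- n) = - signed_monomial n.
Proof. by rewrite /signed_monomial sgzN abszN scaleNr. Qed.

Lemma signed_monomial_deriv1 n : ((signed_monomial n)^`()).[1] = n.
Proof.
by rewrite derivZ derivXn hornerZ hornerMn hornerXn expr1n natz -intEsg.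
Qed.

Lemma card_set_int n (P : pred 'I_n) : (#|[set i | P i]|)%:Z = \sum_(i < n) (P i)%:Z.
Proof.
rewrite -sum1dep_card -natz natr_sum big_mkcond /=.
by apply: eq_bigr => i _; case: (P i).
Qed.

Lemma u_k_sum s k : u_k s k =
  \sum_(e <- s) ((arrow_index s e == k%:Z)%:Z - (arrow_index s e == - k%:Z)%:Z).
Proof.
rewrite /u_k !card_set_int -sumrB (big_nth (0, 0)%N) big_mkord.
by apply: eq_bigr => i _; rewrite nval_arrow_index.
Qed.

Lemma u_poly_sum s : u_poly s = \sum_(e <- s) signed_monomial (arrow_index s e).
Proof.
apply/polyP => k; rewrite coef_poly coef_sum.
under eq_bigr do rewrite coef_signed_monomial.
have [->|k0] := eqVneq k 0%N; first by rewrite big1.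
rewrite u_k_sum; case: ltnP => // ltsk.
(* [u_poly] truncates above degree [size s], harmlessly since [|n(e)| <= size s]. *)
rewrite big1 // => e _; have := norm_arrow_index_le s e.
by do 2![case: eqP => [->|_]]; lia.
Qed.

Lemma tail_neq_head s e : virtual_string s -> e \in s -> e.1 != e.2.
Proof.
elim: s => // f s IHs; rewrite /virtual_string /= inE.
case/andP=> /norP[neq _] /andP[_ vs] /orP[/eqP->|es] //.
exact: IHs.
Qed.

Lemma sum_arrow_index s : virtual_string s -> \sum_(e <- s) arrow_index s e = 0.
Proof.
move=> vs; set S := \sum_(e <- s) _.
suff: S = - S by lia.
rewrite /S /arrow_index [in RHS]exchange_big -sumrN; apply: eq_big_seq => e es.
rewrite -sumrN; apply: eq_big_seq => f fs.
exact: link_sign_antisym (tail_neq_head vs fs) (tail_neq_head vs es).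
Qed.

Lemma u_poly_horner0 s : (u_poly s).[0] = 0.
Proof. by rewrite horner_coef0 coef_poly. Qed.

Lemma u_poly_deriv1 s : virtual_string s -> ((u_poly s)^`()).[1] = 0.
Proof.
move=> vs; rewrite u_poly_sum raddf_sum horner_sum -[RHS](sum_arrow_index vs).
by apply: eq_bigr => e _; rewrite signed_monomial_deriv1.
Qed.

Lemma mem_endpoints s e : e \in s -> (e.1 \in endpoints s) && (e.2 \in endpoints s).
Proof.
move=> es; apply/andP; split; apply/flattenP; exists [:: e.1; e.2];
  rewrite ?map_f ?inE ?eqxx ?orbT //.
Qed.

Lemma endpoints_cat s t : endpoints (s ++ t) = endpoints s ++ endpoints t.
Proof. by rewrite /endpoints map_cat flatten_cat. Qed.

Lemma in_arc_mono (D : {pred nat}) (g : nat -> nat) :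
    {in D &, {mono g : x y / (x < y)%N}} ->
  {in D & D & D, forall a b x, in_arc (g a) (g b) (g x) = in_arc a b x}.
Proof. by move=> gmono a b x Da Db Dx; rewrite /in_arc !gmono. Qed.

Lemma in_arc_nmono (D : {pred nat}) (g : nat -> nat) :
    {in D &, {mono g : x y /~ (x < y)%N}} ->
  {in D & D & D, forall a b x, in_arc (g a) (g b) (g x) = in_arc b a x}.
Proof. by move=> gmono a b x Da Db Dx; rewrite /in_arc !gmono // andbC orbC. Qed.

Definition relabel (g : nat -> nat) (s : seq (nat * nat)) : seq (nat * nat) :=
  [seq (g e.1, g e.2) | e <- s].

Section Relabel.

Variables (g : nat -> nat) (s : seq (nat * nat)).

Lemma endpoints_relabel : endpoints (relabel g s) = map g (endpoints s).
Proof. by rewrite /endpoints /relabel map_flatten -!map_comp. Qed.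

Lemma virtual_string_relabel :
  {in endpoints s &, injective g} -> virtual_string s -> virtual_string (relabel g s).
Proof. by move=> ginj; rewrite /virtual_string endpoints_relabel map_inj_in_uniq. Qed.

Lemma u_poly_relabel_mono :
  {in endpoints s &, {mono g : x y / (x < y)%N}} -> u_poly (relabel g s) = u_poly s.
Proof.
move=> gmono; rewrite !u_poly_sum big_map; apply: eq_big_seq => e es.
rewrite /arrow_index big_map; congr signed_monomial; apply: eq_big_seq => f fs.
case/andP: (mem_endpoints es) => ? ?; case/andP: (mem_endpoints fs) => ? ?.
by rewrite /link_sign /links_pos /links_neg /= !(in_arc_mono gmono).
Qed.

Lemma u_poly_relabel_nmono :
  {in endpoints s &, {mono g : x y /~ (x < y)%N}} -> u_poly (relabel g s) = - u_poly s.
Proof.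
move=> gmono; rewrite !u_poly_sum big_map -sumrN; apply: eq_big_seq => e es.
rewrite /arrow_index big_map -signed_monomialN -sumrN; congr signed_monomial.
apply: eq_big_seq => f fs.
case/andP: (mem_endpoints es) => ? ?; case/andP: (mem_endpoints fs) => ? ?.
by rewrite /link_sign /links_pos /links_neg /= !(in_arc_nmono gmono) // opprB.
Qed.

End Relabel.

Lemma u_poly_cat s t :
    {in endpoints s & endpoints t, forall x y, (x < y)%N} ->
  u_poly (s ++ t) = u_poly s + u_poly t.
Proof.
move=> lt_st.
have sep e f : e \in s -> f \in t -> link_sign e f = 0 /\ link_sign f e = 0.
  case/mem_endpoints/andP=> e1 e2 /mem_endpoints/andP[f1 f2].
  by apply: link_sign_separated; rewrite leq_min !gtn_max !lt_st.
rewrite !u_poly_sum big_cat /=; congr (_ + _); apply: eq_big_seq => e es;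
  rewrite /arrow_index big_cat /=; congr signed_monomial.
- by rewrite [X in _ + X]big1_seq ?addr0 // => f /andP[_ /(sep _ _ es)[]].
- by rewrite [X in X + _]big1_seq ?add0r // => f /andP[_ /sep/(_ es)[]].
Qed.

Definition max_endpoint (s : seq (nat * nat)) : nat := \max_(x <- endpoints s) x.

Lemma leq_max_endpoint s x : x \in endpoints s -> (x <= max_endpoint s)%N.
Proof. by move=> xs; apply: (leq_bigmax_seq (F := id)). Qed.

Definition realizable (p : {poly int}) : Prop :=
  exists s, virtual_string s /\ u_poly s = p.

Lemma realizable0 : realizable 0.
Proof. by exists [::]; rewrite u_poly_sum big_nil. Qed.

Lemma realizableN p : realizable p -> realizable (- p).
Proof.
case=> s [vs <-]; set N := max_endpoint s.
exists (relabel (subn N) s); split.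
  by apply: virtual_string_relabel => // x y /leq_max_endpoint ? /leq_max_endpoint ?; lia.
apply: u_poly_relabel_nmono => x y /leq_max_endpoint xN _.
exact: ltn_sub2lE.
Qed.

Lemma realizableD p q : realizable p -> realizable q -> realizable (p + q).
Proof.
case=> s [vs <-] [t [vt <-]]; set N := (max_endpoint s).+1.
set t' := relabel (addn^~ N) t.
have lt_st : {in endpoints s & endpoints t', forall x y, (x < y)%N}.
  move=> x y /leq_max_endpoint xs; rewrite endpoints_relabel => /mapP[z _ ->].
  exact: leq_trans (leq_addl z N).
have vt' : virtual_string t'.
  by apply: virtual_string_relabel => // x y _ _; apply: addIn.
exists (s ++ t'); split.
  rewrite /virtual_string endpoints_cat cat_uniq; apply/and3P; split => //.
  by apply/hasPn => y yt'; apply/negP => ys; have := lt_st y y ys yt'; rewrite ltnn.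
by rewrite u_poly_cat // u_poly_relabel_mono // => x y _ _; apply: ltn_add2r.
Qed.

Lemma realizable_sum (I : Type) (r : seq I) (P : pred I) (F : I -> {poly int}) :
  (forall i, P i -> realizable (F i)) -> realizable (\sum_(i <- r | P i) F i).
Proof.
move=> realF; elim/big_rec: _ => [|i p Pi realp]; first exact: realizable0.
exact: realizableD (realF i Pi) realp.
Qed.

Lemma realizableZ (c : int) p : realizable p -> realizable (c *: p).
Proof.
move=> realp; rewrite -[c]intz scaler_int.
have realpn n : realizable (p *+ n).
  have -> : p *+ n = \sum_(i < n) p by rewrite sumr_const card_ord.
  exact: realizable_sum.
by case: c => n; [apply: realpn | apply/realizableN/realpn].
Qed.

Lemma perm_endpoints s : perm_eq (endpoints s) (unzip1 s ++ unzip2 s).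
Proof.
elim: s => //= e s IHs.
by rewrite perm_cons perm_sym -cat1s perm_catCA /= perm_cons perm_sym.
Qed.

Lemma virtual_stringE s : virtual_string s = uniq (unzip1 s ++ unzip2 s).
Proof. exact: perm_uniq (perm_endpoints s). Qed.

Definition fan (k : nat) : seq (nat * nat) :=
  (0, k.+1)%N :: [seq (i, k.*2.+2 - i)%N | i <- iota 1 k].

Lemma virtual_string_fan k : virtual_string (fan k).
Proof.
have tailsE : unzip1 (fan k) = iota 0 k.+1 by rewrite /= /unzip1 -map_comp map_id.
have headsE : unzip2 (fan k) = k.+1 :: [seq k.*2.+2 - i | i <- iota 1 k]%N.
  by rewrite /unzip2 /= -map_comp.
have lt_heads y : y \in unzip2 (fan k) -> (k < y)%N.
  by rewrite headsE inE => /predU1P[->|/mapP[i]] //; rewrite mem_iota => ? ->; lia.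
have uniq_heads : uniq (unzip2 (fan k)).
  rewrite headsE /= map_inj_in_uniq ?iota_uniq ?andbT.
    by apply/mapP => -[i]; rewrite mem_iota => ? ?; lia.
  by move=> i j; rewrite !mem_iota => ? ?; lia.
rewrite virtual_stringE cat_uniq uniq_heads tailsE iota_uniq andbT andTb.
by apply/hasPn => y /lt_heads ky; rewrite mem_iota; lia.
Qed.

Lemma arrow_index_fan_long k : arrow_index (fan k) (0, k.+1)%N = k%:Z.
Proof.
rewrite /arrow_index big_cons link_sign_diag add0r big_map.
rewrite (eq_big_seq (fun=> 1)) => [|i]; last first.
  rewrite mem_iota /link_sign /links_pos /links_neg /in_arc /= => ?.
  by do ![case: ltnP => ?]; lia.
by rewrite big_const_seq count_predT size_iota iter_addr_0 natz.
Qed.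

Lemma arrow_index_fan_short k i :
  (0 < i <= k)%N -> arrow_index (fan k) (i, k.*2.+2 - i)%N = -1.
Proof.
move=> ik; rewrite /arrow_index big_cons big_map big1_seq ?addr0.
  rewrite /link_sign /links_pos /links_neg /in_arc /=.
  by do ![case: ltnP => ?]; lia.
move=> j /andP[_]; rewrite mem_iota /link_sign /links_pos /links_neg /in_arc /= => ?.
by do ![case: ltnP => ?]; lia.
Qed.

Lemma u_poly_fan k : (0 < k)%N -> u_poly (fan k) = 'X^k - 'X *+ k.
Proof.
move=> k_gt0; rewrite u_poly_sum big_cons arrow_index_fan_long big_map.
rewrite (eq_big_seq (fun=> - 'X)) => [|i]; last first.
  rewrite mem_iota => ik; rewrite arrow_index_fan_short; last by lia.
  by rewrite signed_monomialN /signed_monomial sgz1 scale1r.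
rewrite /signed_monomial absz_nat gtr0_sgz ?ltz_nat // scale1r.
by rewrite big_const_seq count_predT size_iota iter_addr_0 mulNrn.
Qed.

Lemma realizable_fan k : (0 < k)%N -> realizable ('X^k - 'X *+ k).
Proof. by move=> k_gt0; exists (fan k); rewrite virtual_string_fan u_poly_fan. Qed.

Lemma horner1_deriv (R : nzRingType) (p : {poly R}) :
  (p^`()).[1] = \sum_(k < size p) p`_k *+ k.
Proof.
rewrite /deriv horner_poly; case: (size p) => [|n]; first by rewrite !big_ord0.
by rewrite big_ord_recl mulr0n add0r; apply: eq_bigr => i _; rewrite expr1n mulr1.
Qed.

Lemma poly_sub_deriv1 (R : nzRingType) (p : {poly R}) :
  p - (p^`()).[1] *: 'X = \sum_(k < size p) p`_k *: ('X^k - 'X *+ k).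
Proof.
under eq_bigr do rewrite scalerBr -scalerMnr scalerMnl.
by rewrite sumrB -poly_def coefK horner1_deriv scaler_suml.
Qed.

Theorem theorem3p1 (u : {poly int}) :
  (exists s : seq (nat * nat), virtual_string s /\ u_poly s = u)
  <-> (u.[0] = 0 /\ (u^`()).[1] = 0).
Proof.
split=> [[s [vs <-]]|[u0 du1]]; first by rewrite u_poly_horner0 u_poly_deriv1.
have -> : u = \sum_(k < size u) u`_k *: ('X^k - 'X *+ k).
  by rewrite -poly_sub_deriv1 du1 scale0r subr0.
apply: realizable_sum => -[[|k] _] _ /=.
  by rewrite -horner_coef0 u0 scale0r; apply: realizable0.
exact/realizableZ/realizable_fan.
Qed.
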